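(* Let $\bar x_1,\dots,\bar x_k\in\mathfrak M$ and suppose the product $\bar x_1\bar x_2\cdots\bar x_k$ is increasing. Then there exists $i\in\{1,\dots,k-1\}$ such that $\bar x_i\bar x_{i+1}$ is increasing; moreover, for all $1\le r\le i$ and $i<r'\le k$, the product $\bar x_r\bar x_{r+1}\cdots\bar x_{r'}$ is increasing.
   Context: Fix a deterministic automaton with finite state set $Q$, alphabet $\Sigma$ and transition function $\delta$. Elements of $\mathfrak M$ are directed graphs on vertex set $Q$ whose edges are labelled by subsets of $Q$. The product $\bar x\cdot\bar y$ has an edge $q_1\xrightarrow{S_1\cup S_2}q_2$ iff there is $q'$ with an edge $q_1\xrightarrow{S_1}q'$ in $\bar x$ and $q'\xrightarrow{S_2}q_2$ in $\bar y$. For $a\in\Sigma$, $h(a)$ has an edge $q_1\xrightarrow{\{q_1,q_2\}}q_2$ iff $\delta(q_1,a)=q_2$. $\mathfrak M$ is the monoid generated by $\{h(a):a\in\Sigma\}$ together with the identity element $h(\epsilon)$ (edges $q\xrightarrow{\{q\}}q$). In every element of $\mathfrak M$ each $q\in Q$ has exactly one outgoing edge; its label is called the set of states seen from $q$. A product $\bar x=\bar x_1\cdots\bar x_k$ is increasing if there exists $q\in Q$ such that the set of states seen from $q$ in $\bar x_1$ is a strict subset of the set of states seen from $q$ in $\bar x$. *)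

From mathcomp Require Import all_boot.
Set Implicit Arguments. Unset Strict Implicit. Unset Printing Implicit Defensive.

Section Graphs.
Variables (Q Sigma : finType) (delta : Q -> Sigma -> Q).

(* An element of M: a set of labelled edges (q1, S, q2), encoded as ((q1, S), q2). *)
Definition elt := {set (Q * {set Q}) * Q}.

Definition gmul (x y : elt) : elt :=
  [set e | [exists q' : Q, exists S1 : {set Q}, exists S2 : {set Q},
     [&& ((e.1.1, S1), q') \in x, ((q', S2), e.2) \in y & e.1.2 == S1 :|: S2]]].

Definition hlet (a : Sigma) : elt :=
  [set e | (delta e.1.1 a == e.2) && (e.1.2 == [set e.1.1; e.2])].

Definition hid : elt := [set e | (e.2 == e.1.1) && (e.1.2 == [set e.1.1])].

Definition hword (w : seq Sigma) : elt := foldr (fun a acc => gmul (hlet a) acc) hid w.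

Definition inM (x : elt) : Prop := exists w : seq Sigma, x = hword w.

(* Set of states seen from q in x: the label of the (unique) outgoing edge of q. *)
Definition seen (x : elt) (q : Q) : {set Q} :=
  odflt set0 [pick S : {set Q} | [exists q' : Q, ((q, S), q') \in x]].

Definition gprod (xs : seq elt) : elt := foldr gmul hid xs.

Definition increasing (xs : seq elt) : Prop :=
  exists q : Q, seen (head hid xs) q \proper seen (gprod xs) q.

(* The factors x_r, ..., x_r' (1-based indices) of xs. *)
Definition slice (xs : seq elt) (r r' : nat) : seq elt :=
  take (r'.+1 - r) (drop r.-1 xs).

End Graphs.

From mathcomp Require Import all_boot.
Set Implicit Arguments. Unset Strict Implicit. Unset Printing Implicit Defensive.

(* Every element of M is the graph of a "behaviour": a pair of maps sending a
   state q to the end of its unique outgoing edge and to the label of that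
   edge (the states seen from q).  The graph map turns products of behaviours
   into products of M, so seen-sets of products obey the union formula
     seen (x y) q = seen x q :|: seen y (end of the edge of q in x).

   For a fixed state q let V j be the seen-set from q of the prefix
   x_1 ... x_j.  If x_1 ... x_k is increasing at q, then V k is not contained
   in V 1, so some step breaks: V (i+1) is not contained in V i with
   1 <= i < k (lemma [first_break]).  For r <= i < r', run the product
   x_r ... x_r' from the state t reached from q after x_1 ... x_(r-1): the
   seen-set of x_r from t lies in V i, while x_r ... x_(i+1) already sees a
   state outside V i (lemma [increasing_across]). *)

Section Behaviours.
Variable Q : finType.

Record behaviour := Behaviour { dest : Q -> Q; visited : Q -> {set Q} }.

Definition bmul (a b : behaviour) : behaviour :=
  Behaviour (fun q => dest b (dest a q)) (fun q => visited a q :|: visited b (dest a q)).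

Definition bone : behaviour := Behaviour id (fun q => [set q]).

Definition bprod (s : seq behaviour) : behaviour := foldr bmul bone s.

(* The behaviours occurring in M: the label of every edge contains both of
   its endpoints. *)
Definition ends_seen (b : behaviour) : bool :=
  [forall q, (q \in visited b q) && (dest b q \in visited b q)].

Definition graph (b : behaviour) : elt Q :=
  [set e | (e.2 == dest b e.1.1) && (e.1.2 == visited b e.1.1)].

Lemma gmul_graph a b : gmul (graph a) (graph b) = graph (bmul a b).
Proof.
apply/setP => -[[q1 S] q2]; rewrite !inE /=.
apply/existsP/andP => [[q' /existsP[S1 /existsP[S2 /and3P[]]]]|[/eqP-> /eqP->]].
  by rewrite !inE /= => /andP[/eqP-> /eqP->] /andP[/eqP-> /eqP->] /eqP->.
exists (dest a q1); apply/existsP; exists (visited a q1); apply/existsP.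
by exists (visited b (dest a q1)); rewrite !inE /= !eqxx.
Qed.

Lemma hid_graph : @hid Q = graph bone.
Proof. by apply/setP => -[[q1 S] q2]; rewrite !inE. Qed.

Lemma gprod_graph s : gprod (map graph s) = graph (bprod s).
Proof. by elim: s => [|b s IH] /=; rewrite ?hid_graph // IH gmul_graph. Qed.

Lemma seen_graph b q : seen (graph b) q = visited b q.
Proof.
rewrite /seen; case: pickP => [S /existsP[q'] | /(_ (visited b q)) /negbT /existsPn].
  by rewrite inE /= => /andP[_ /eqP].
by move/(_ (dest b q)); rewrite inE /= !eqxx.
Qed.

Lemma ends_seen_bprod s : all ends_seen s -> ends_seen (bprod s).
Proof.
elim: s => [_|a s IH]; first by apply/forallP => q; rewrite !inE eqxx.
case/andP=> /forallP Ha /IH /forallP Hs; apply/forallP => q; rewrite !inE.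
by case/andP: (Ha q) => -> _; case/andP: (Hs (dest a q)) => _ ->; rewrite orbT.
Qed.

(* The union formula for the seen-set of a concatenated product; the states
   seen by a product include its starting state, whence [ends_seen]. *)
Lemma visited_bprod_cat s1 s2 q : all ends_seen s2 ->
  visited (bprod (s1 ++ s2)) q =
  visited (bprod s1) q :|: visited (bprod s2) (dest (bprod s1) q).
Proof.
move=> /ends_seen_bprod /forallP Hs2.
elim: s1 q => [|a s1 IH] q /=; last by rewrite IH setUA.
by apply/esym/setUidPr; rewrite sub1set; case/andP: (Hs2 q).
Qed.

Lemma visited_bprod_prefix s1 s2 q : all ends_seen s2 ->
  visited (bprod s1) q \subset visited (bprod (s1 ++ s2)) q.
Proof. by move=> Hs2; rewrite visited_bprod_cat // subsetUl. Qed.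

End Behaviours.
Arguments graph {Q} b.
Arguments ends_seen {Q} b.

Section Letters.
Variables (Q Sigma : finType) (delta : Q -> Sigma -> Q).

Definition letter (a : Sigma) : behaviour Q :=
  Behaviour (delta^~ a) (fun q => [set q; delta q a]).

Lemma hlet_graph a : hlet delta a = graph (letter a).
Proof.
apply/setP => -[[q1 S] q2]; rewrite !inE /=.
by case: eqVneq => [->|] //=; rewrite eqxx.
Qed.

Lemma hword_graph w : hword delta w = graph (bprod (map letter w)).
Proof.
by elim: w => [|a w IH] /=; rewrite ?hid_graph // IH hlet_graph gmul_graph.
Qed.

Lemma inM_graph x : inM delta x -> exists2 b, x = graph b & ends_seen b.
Proof.
case=> w ->; exists (bprod (map letter w)); first exact: hword_graph.
apply: ends_seen_bprod; rewrite all_map; apply/allP => a _ /=.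
by apply/forallP => q; rewrite !inE !eqxx orbT.
Qed.

Lemma seq_inM_graph (xs : seq (elt Q)) : {in xs, forall x, inM delta x} ->
  exists2 bs, xs = map graph bs & all ends_seen bs.
Proof.
elim: xs => [|x xs IH] Hxs; first by exists [::].
have [b -> Hb] := inM_graph (Hxs x (mem_head _ _)).
have [bs -> Hbs] : exists2 bs, xs = map graph bs & all ends_seen bs.
  by apply: IH => y Hy; apply: Hxs; rewrite inE Hy orbT.
by exists (b :: bs); rewrite //= Hb.
Qed.

End Letters.

Lemma first_break (T : Type) (R : rel T) (f : nat -> T) m n :
  reflexive R -> transitive R -> m <= n -> ~~ R (f n) (f m) ->
  exists2 i, m <= i < n & ~~ R (f i.+1) (f i).
Proof.
move=> Rrefl Rtrans; elim: n => [|n IH].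
  by rewrite leqn0 => /eqP->; rewrite Rrefl.
rewrite leq_eqVlt => /orP[/eqP<- | Hmn]; first by rewrite Rrefl.
have [Hn | Hn] := boolP (R (f n) (f m)).
  move=> Hnm; exists n; first by apply/andP; split; [exact: Hmn | exact: ltnSn].
  by apply: contra Hnm => Hstep; apply: Rtrans Hstep Hn.
by case: (IH Hmn Hn) => i /andP[Hmi Hin] Hi; exists i; rewrite // Hmi ltnS ltnW.
Qed.

Definition segment (T : Type) (s : seq T) (m n : nat) : seq T :=
  take (n - m) (drop m s).

Lemma segment_cat (T : Type) (s : seq T) m n p : m <= n <= p ->
  segment s m p = segment s m n ++ segment s n p.
Proof.
case/andP=> Hmn Hnp; rewrite /segment.
have -> : drop n s = drop (n - m) (drop m s) by rewrite drop_drop subnK.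
by rewrite -takeD addnC addnBA // subnK.
Qed.

Lemma take_segment (T : Type) (s : seq T) n : take n s = segment s 0 n.
Proof. by rewrite /segment drop0 subn0. Qed.

Lemma size_segment_gt0 (T : Type) (s : seq T) m n : m < n <= size s ->
  0 < size (segment s m n).
Proof.
by case/andP=> Hmn Hns; rewrite size_takel ?size_drop ?leq_sub2r // subn_gt0.
Qed.

Lemma all_segment (T : Type) (P : pred T) (s : seq T) m n :
  all P s -> all P (segment s m n).
Proof.
rewrite /segment => Hs.
have : all P (drop m s) by move: Hs; rewrite -{1}(cat_take_drop m s) all_cat => /andP[].
by rewrite -{1}(cat_take_drop (n - m) (drop m s)) all_cat => /andP[].
Qed.

Section Increasing.
Variable Q : finType.

Definition increasing_run (bs : seq (behaviour Q)) : Prop :=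
  exists q, visited (head (bone Q) bs) q \proper visited (bprod bs) q.

Lemma increasing_graph bs : increasing (map graph bs) <-> increasing_run bs.
Proof.
rewrite /increasing.
have -> : head (@hid Q) (map graph bs) = graph (head (bone Q) bs).
  by case: bs => [|b bs]; rewrite //= hid_graph.
rewrite gprod_graph.
by split=> -[q Hq]; exists q; move: Hq; rewrite !seen_graph.
Qed.

(* If appending c to a ++ b enlarges the seen-set of q, then b ++ c ++ d is
   increasing, as witnessed by the state reached from q after a. *)
Lemma increasing_across (a b c d : seq (behaviour Q)) q :
  0 < size b -> all ends_seen (b ++ c ++ d) ->
  ~~ (visited (bprod (a ++ b ++ c)) q \subset visited (bprod (a ++ b)) q) ->
  increasing_run (b ++ c ++ d).
Proof.
rewrite !all_cat => Hb /and3P[Hbs Hcs Hds] Hgrow.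
set t := dest (bprod a) q; set A := visited (bprod (a ++ b)) q.
have HbA : visited (bprod b) t \subset A by rewrite /A visited_bprod_cat ?subsetUr.
have HbcA : ~~ (visited (bprod (b ++ c)) t \subset A).
  apply: contra Hgrow => Hbc; rewrite visited_bprod_cat ?all_cat ?Hbs //.
  by rewrite subUset Hbc andbT /A visited_bprod_prefix.
have Hhead : visited (head (bone Q) (b ++ c ++ d)) t \subset visited (bprod b) t.
  by case: b Hb {Hbs HbA HbcA Hgrow A} => [|x b] //= _; rewrite subsetUl.
exists t; rewrite properE; apply/andP; split.
  by apply: subset_trans Hhead (visited_bprod_prefix _ _ _); rewrite all_cat Hcs.
apply: contra HbcA => Hall; apply: subset_trans HbA; apply: subset_trans Hhead.
by apply: subset_trans Hall; rewrite catA visited_bprod_prefix.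
Qed.

Lemma increasing_run_split (bs : seq (behaviour Q)) :
  all ends_seen bs -> increasing_run bs ->
  exists2 i, 0 < i < size bs &
    forall m n, m < i -> i < n <= size bs -> increasing_run (segment bs m n).
Proof.
move=> Hbs [q Hq].
have Hsize : 0 < size bs by case: bs Hq Hbs => //=; rewrite properxx.
have HV1 : visited (bprod (take 1 bs)) q = visited (head (bone Q) bs) q.
  case: bs Hbs {Hq Hsize} => [|b bs] //= /andP[/forallP Hb _].
  by rewrite take0 /=; apply/setUidPl; rewrite sub1set; case/andP: (Hb q).
pose V j := visited (bprod (take j bs)) q.
have [i /andP[Hi1 Hik] Hbreak] : exists2 i, 1 <= i < size bs & ~~ (V i.+1 \subset V i).
  apply: (@first_break _ [rel A B : {set Q} | A \subset B]) => //=.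
  - exact: subxx.
  - by move=> A B C; apply: subset_trans.
  by rewrite /V HV1 take_size; move: Hq; rewrite properE => /andP[].
exists i; first by rewrite Hi1 Hik.
move=> m n Hmi /andP[Hin Hns].
have Hseg : segment bs m n =
    segment bs m i ++ segment bs i i.+1 ++ segment bs i.+1 n.
  by rewrite -!segment_cat ?leqnSn ?Hin ?(ltnW Hmi) ?(ltnW Hin).
rewrite Hseg; apply: (increasing_across (a := segment bs 0 m) (q := q)).
- by rewrite size_segment_gt0 ?Hmi ?(leq_trans (ltnW Hin)).
- by rewrite -Hseg all_segment.
move: Hbreak; rewrite /V !take_segment.
by rewrite -!segment_cat ?leqnSn ?(ltnW Hmi) ?(leqW (ltnW Hmi)).
Qed.

End Increasing.

Lemma slice_segment (Q : finType) (xs : seq (elt Q)) r r' : 0 < r ->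
  slice xs r r' = segment xs r.-1 r'.
Proof. by case: r => // r _; rewrite /slice /segment subSS. Qed.

Theorem mainTheorem14 (Q Sigma : finType) (delta : Q -> Sigma -> Q)
    (xs : seq (elt Q)) :
  (forall x, x \in xs -> inM delta x) ->
  increasing xs ->
  exists i : nat,
    [/\ 1 <= i <= (size xs).-1,
        increasing (slice xs i i.+1)
      & forall r r' : nat, 1 <= r <= i -> i < r' <= size xs ->
          increasing (slice xs r r')].
Proof.
move=> /seq_inM_graph [bs -> Hbs] /increasing_graph Hinc.
have [i /andP[Hi Hik] Hsplit] := increasing_run_split Hbs Hinc.
have Hslices r r' : 1 <= r <= i -> i < r' <= size (map graph bs) ->
    increasing (slice (map graph bs) r r').
  case/andP=> Hr Hri /andP[Hir' Hr'k].
  rewrite slice_segment // /segment -map_drop -map_take; apply/increasing_graph.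
  by apply: Hsplit; rewrite ?prednK // Hir' -(size_map graph).
exists i; split; last exact: Hslices.
- by rewrite Hi size_map -ltnS prednK // (leq_trans _ Hik).
by apply: Hslices; rewrite ?Hi ?leqnn // size_map.
Qed.
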